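(* Let $d\geq1$, $\lambda>0$, $\beta\geq 0$. Suppose $(T_0,Y_0)\in L^\infty_x(\mathbb{R}^d)\times L^\infty_x(\mathbb{R}^d)$ with $Y_0\geq 0$, and let $(T,Y)\in C^0_tL^\infty_x\times C^0_tL^\infty_x$ be a corresponding mild solution of the Cauchy problem below. Then for all $t$ at which the solution is defined, $$\|T(\cdot,t)\|_{L^\infty_x}\leq e^{-\lambda t}\|T_0\|_{L^\infty_x}+\lambda^{-1}\|Y_0\|_{L^\infty_x}.$$
   Context: The reaction rate is $r(T)=e^{-1/T}$ for $T>0$ and $r(T)=0$ for $T\leq 0$. The Cauchy problem is $T_t=(\Delta-\lambda)T+Yr(T)$, $Y_t=-\beta Y r(T)$, $T|_{t=0}=T_0$, $Y|_{t=0}=Y_0$ on $\mathbb{R}^d$. A pair $(T,Y)\in C^0_tL^\infty_x\times C^0_tL^\infty_x$ (continuous curves from the time interval into $L^\infty_x$) is a mild solution if for all $t$ in the time interval $$T(x,t)=e^{-\lambda t}e^{t\Delta}T_0+\int_0^t e^{-\lambda(t-\tau)}e^{(t-\tau)\Delta}\big(Y(\cdot,\tau)r(T(\cdot,\tau))\big)\,d\tau,\qquad Y(x,t)=Y_0(x)\exp\Big(-\beta\int_0^t r(T(x,\sigma))\,d\sigma\Big),$$ where $e^{t\Delta}$ is the heat semigroup on $\mathbb{R}^d$. *)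

From HB Require Import structures.
From mathcomp Require Import all_boot all_order all_algebra.
From mathcomp Require Import all_classical all_reals all_analysis.
Import Order.TTheory GRing.Theory Num.Theory.
Import numFieldNormedType.Exports.

Set Implicit Arguments.
Unset Strict Implicit.
Unset Printing Implicit Defensive.

Local Open Scope classical_set_scope.
Local Open Scope ring_scope.

(* Euclidean space R^(n.+1), encoded as the iterated product                *)
(*   ((R * R) * ...) * R   (n.+1 factors),                                  *)
(* The dimension d of the paper is n.+1 (so d >= 1 is built in).           *)
Fixpoint RdT (R : realType) (n : nat) : {k : measure_display & measurableType k} :=
  match n with
  | 0 => existT measurableType _ (measurableTypeR R)
  | m.+1 => existT measurableType _
              ((projT2 (RdT R m) * measurableTypeR R)%type : measurableType _)
  end.

Definition Rd (R : realType) (n : nat) : measurableType (projT1 (RdT R n)) :=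
  projT2 (RdT R n).

Fixpoint lebd (R : realType) (n : nat) : {measure set (Rd R n) -> \bar R} :=
  match n return {measure set (Rd R n) -> \bar R} with
  | 0 => (@lebesgue_measure R : {measure set (Rd R 0) -> \bar R})
  | m.+1 => (((lebd R m) \x (@lebesgue_measure R))%E
               : {measure set (Rd R m.+1) -> \bar R})
  end.

Fixpoint sqdist (R : realType) (n : nat) : Rd R n -> Rd R n -> R :=
  match n return Rd R n -> Rd R n -> R with
  | 0 => fun x y => ((x : R) - (y : R)) ^+ 2
  | m.+1 => fun x y => @sqdist R m x.1 y.1 + ((x.2 : R) - (y.2 : R)) ^+ 2
  end.

Definition Linf (R : realType) (n : nat) (f : Rd R n -> R) : \bar R :=
  Lnorm (lebd R n) +oo%E (fun x => (f x)%:E).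

Definition in_Linf (R : realType) (n : nat) (f : Rd R n -> R) : Prop :=
  measurable_fun [set: Rd R n] f /\ (Linf f < +oo)%E.

Definition heat_kernel (R : realType) (n : nat) (s : R) (x y : Rd R n) : R :=
  (Num.sqrt (4 * pi * s)) ^- n.+1 * expR (- (sqdist x y / (4 * s))).

(* Heat semigroup e^{s Delta} on R^d: convolution with the heat kernel for  *)
(* s > 0, and the identity for s = 0 (negative s is never used).            *)
Definition heat_sg (R : realType) (n : nat) (s : R) (f : Rd R n -> R)
    (x : Rd R n) : R :=
  if 0 < s then Rintegral (lebd R n) [set: Rd R n] (fun y => heat_kernel s x y * f y)
  else f x.

Definition rate (R : realType) (T : R) : R :=
  if 0 < T then expR (- T^-1) else 0.

Definition time_interval (R : realType) (I : set R) : Prop :=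
  I 0 /\ I `<=` `[0, +oo[ /\ (forall t, I t -> `[0, t] `<=` I).

Definition C0_Linf (R : realType) (n : nat) (I : set R) (u : R -> Rd R n -> R)
    : Prop :=
  (forall t, I t -> in_Linf (u t)) /\
  (forall t, I t -> forall e : R, 0 < e -> exists2 delta : R, 0 < delta &
     forall s, I s -> `|s - t| < delta ->
       (Linf (fun x => (u s x - u t x)%R) <= e%:E)%E).

(* Since T(., t), Y(., t) are elements of L^oo_x, the defining identities  *)
(* are required to hold for almost every x (for every t in I).              *)
Definition mild_solution (R : realType) (n : nat) (lambda beta : R)
    (T0 Y0 : Rd R n -> R) (I : set R) (T Y : R -> Rd R n -> R) : Prop :=
  C0_Linf I T /\ C0_Linf I Y /\
  (forall t, I t ->
    {ae lebd R n, forall x,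
      T t x = expR (- lambda * t) * heat_sg t T0 x
              + Rintegral (@lebesgue_measure R) `[0, t]
                  (fun tau => expR (- lambda * (t - tau)) *
                     heat_sg (t - tau) (fun y => Y tau y * rate (T tau y)) x)}) /\
  (forall t, I t ->
    {ae lebd R n, forall x,
      Y t x = Y0 x * expR (- beta *
                Rintegral (@lebesgue_measure R) `[0, t] (fun sigma => rate (T sigma x)))}).

(* The heat kernel is a probability density, so e^{s Delta} does not increase
   the L^oo norm.  The reaction term Y r(T) is bounded by ||Y0||_oo, because
   0 <= r <= 1 and |Y(t)| = |Y0| exp(-beta int_0^t r(T)) <= |Y0|.  Inserting these
   bounds into the Duhamel formula gives
     |T(x,t)| <= e^{-lambda t} ||T0||_oo + ||Y0||_oo int_0^t e^{-lambda (t - tau)} dtau,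
   and the last integral equals (1 - e^{-lambda t}) / lambda <= 1 / lambda. *)

From HB Require Import structures.
From mathcomp Require Import all_boot all_order all_algebra.
From mathcomp Require Import all_classical all_reals all_analysis.
From mathcomp Require Import ring lra measurable_realfun ess_sup_inf.
Import Order.TTheory GRing.Theory Num.Theory.
Import numFieldNormedType.Exports.
Local Open Scope classical_set_scope.
Local Open Scope ring_scope.

Set Implicit Arguments.
Unset Strict Implicit.
Unset Printing Implicit Defensive.

Section Linfty.
Context d (T : measurableType d) (R : realType) (mu : {measure set T -> \bar R}).
Implicit Type f : T -> R.

Lemma Lnorm_infty_ae_ge f :
  {ae mu, forall x, (`|f x|%:E <= Lnorm mu +oo (fun x => (f x)%:E))%E}.
Proof.
rewrite unlock; case: ifPn => [mu_gt0|]; first exact: ess_sup_ge.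
rewrite lt0e negb_and measure_ge0 orbF negbK => /eqP muT0.
by exists setT; split.
Qed.

Lemma Lnorm_infty_le f B : 0 <= B -> {ae mu, forall x, `|f x| <= B} ->
  (Lnorm mu +oo (fun x => (f x)%:E) <= B%:E)%E.
Proof.
move=> B0 fB; rewrite unlock; case: ifPn => _; last by rewrite lee_fin.
by apply/ess_supP; apply: filterS fB => x /=; rewrite lee_fin.
Qed.

End Linfty.

Section integral_bounds.
Context d (T : measurableType d) (R : realType) (mu : {measure set T -> \bar R}).
Local Open Scope ereal_scope.

(* No measurability is needed: the integral of a nonnegative function is the
   supremum of the integrals of its simple minorants. *)
Lemma le_ge0_integral (D : set T) (f g : T -> \bar R) :
  (forall x, D x -> 0 <= f x) -> (forall x, D x -> f x <= g x) ->
  \int[mu]_(x in D) f x <= \int[mu]_(x in D) g x.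
Proof.
move=> f0 fg; have g0 x : D x -> 0 <= g x.
  by move=> Dx; exact: le_trans (f0 x Dx) (fg x Dx).
rewrite !ge0_integralE//; apply: ereal_sup_le => _ [h hf <-].
exists h => // x; apply: le_trans (hf x) _.
by rewrite /patch; case: ifP => // /set_mem; exact: fg.
Qed.

Lemma normr_Rintegral_le (D : set T) (f g : T -> R) :
  \int[mu]_(x in D) (g x)%:E < +oo -> (forall x, D x -> (`|f x| <= g x)%R) ->
  (`|Rintegral mu D f| <= fine (\int[mu]_(x in D) (g x)%:E))%R.
Proof.
move=> g_fin fg; have g0 x : D x -> (0 <= g x)%R.
  by move=> Dx; exact: le_trans (normr_ge0 _) (fg x Dx).
have G0 : 0 <= \int[mu]_(x in D) (g x)%:E.
  by apply: integral_ge0 => x Dx; rewrite lee_fin g0.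
have P0 : 0 <= \int[mu]_(x in D) (EFin \o f)^\+ x.
  by apply: integral_ge0 => x _; exact: funepos_ge0.
have N0 : 0 <= \int[mu]_(x in D) (EFin \o f)^\- x.
  by apply: integral_ge0 => x _; exact: funeneg_ge0.
have PG : \int[mu]_(x in D) (EFin \o f)^\+ x <= \int[mu]_(x in D) (g x)%:E.
  apply: le_ge0_integral => x Dx; first exact: funepos_ge0.
  by rewrite funeposE ge_max !lee_fin g0// andbT (le_trans (ler_norm _) (fg x Dx)).
have NG : \int[mu]_(x in D) (EFin \o f)^\- x <= \int[mu]_(x in D) (g x)%:E.
  apply: le_ge0_integral => x Dx; first exact: funeneg_ge0.
  rewrite funenegE ge_max !lee_fin g0// andbT.
  by apply: le_trans (fg x Dx); rewrite -normrN ler_norm.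
rewrite /Rintegral integralE; move: PG NG P0 N0 g_fin G0.
case: (\int[mu]_(x in D) _ x) => [p| |]; case: (\int[mu]_(x in D) _ x) => [q| |];
  case: (\int[mu]_(x in D) _) => [G| |] //=; rewrite !lee_fin => pG qG p0 q0 _ _.
by rewrite ler_norml; apply/andP; split; lra.
Qed.

End integral_bounds.

(* [lebesgue_integral_fubini] proves this only as a section-local [Let]. *)
Lemma sigma_finite_product_measure d1 d2 (T1 : measurableType d1)
    (T2 : measurableType d2) (R : realType)
    (m1 : {sigma_finite_measure set T1 -> \bar R})
    (m2 : {sigma_finite_measure set T2 -> \bar R}) :
  sigma_finite setT (m1 \x m2)%E.
Proof.
have /sigma_finiteP[F [F_cover F_nd F_fin]] := sigma_finiteT m1.
have /sigma_finiteP[G [G_cover G_nd G_fin]] := sigma_finiteT m2.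
exists (fun k => F k `*` G k); last first.
  move=> k; have [mF F_lty] := F_fin k; have [mG G_lty] := G_fin k.
  split; first exact: measurableX.
  by rewrite product_measure1E// lte_mul_pinfty// ge0_fin_numE.
apply/seteqP; split => // -[x y] _.
have [i _ Fix] : (\bigcup_k F k) x by rewrite -F_cover.
have [j _ Gjy] : (\bigcup_k G k) y by rewrite -G_cover.
exists (maxn i j) => //; split.
- by move: x Fix; apply/subsetPset/F_nd/leq_maxl.
- by move: y Gjy; apply/subsetPset/G_nd/leq_maxr.
Qed.

Section heat_kernel.
Context (R : realType).

Definition lebd_sigma_finite (n : nat) :
  {mu : {sigma_finite_measure set Rd R n -> \bar R} | mu = lebd R n :> (set _ -> _)}.
Proof.
elim: n => [|n [mu muE]]; first by exists (@lebesgue_measure R).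
pose prod := (mu \x @lebesgue_measure R)%E.
exists (HB.pack_for {sigma_finite_measure set Rd R n.+1 -> \bar R} prod
  (Measure_isSigmaFinite.Build _ _ _ prod (sigma_finite_product_measure _ _))).
exact: (congr1 (fun m : set (Rd R n) -> \bar R => (m \x @lebesgue_measure R)%E) muE).
Defined.

Lemma heat_kernel1E (s : R) (a : Rd R 0) : 0 < s ->
  heat_kernel s a = normal_pdf a (Num.sqrt (2 * s)).
Proof.
move=> s_gt0; apply/funext => b.
have s2_neq0 : Num.sqrt (2 * s) != 0 by rewrite gt_eqF// sqrtr_gt0 mulr_gt0.
rewrite normal_pdfE// /normal_fun /normal_peak sqr_sqrtr ?mulr_ge0 ?ltW//.
rewrite /heat_kernel /= -sqrrN opprB mulNr; congr (_^-1 * expR (- (_ / _))).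
- by congr Num.sqrt; rewrite -mulr_natr; ring.
- by rewrite -mulr_natr; ring.
Qed.

Lemma heat_kernelS n (s : R) (x y : Rd R n.+1) :
  heat_kernel s x y = heat_kernel s x.1 y.1 * heat_kernel s (x.2 : Rd R 0) y.2.
Proof.
rewrite /heat_kernel /= -[in RHS]mulrACA -expRD -opprD -mulrDl.
by rewrite exprS invfM expr1 [_^-1 / _]mulrC.
Qed.

Lemma heat_kernel_ge0 n (s : R) (x y : Rd R n) : 0 <= heat_kernel s x y.
Proof. by rewrite mulr_ge0 ?expR_ge0// invr_ge0 exprn_ge0// sqrtr_ge0. Qed.

Lemma measurable_heat_kernel n (s : R) (x : Rd R n) : 0 < s ->
  measurable_fun setT (heat_kernel s x).
Proof.
move=> s_gt0; elim: n x => [|n IHn] x.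
  rewrite heat_kernel1E//; exact: measurable_normal_pdf.
rewrite (funext (heat_kernelS s x)); apply: measurable_funM.
- exact: measurableT_comp (IHn x.1) measurable_fst.
- rewrite heat_kernel1E//.
  exact: measurableT_comp (measurable_normal_pdf _ _) measurable_snd.
Qed.

Lemma integral_heat_kernel n (s : R) (x : Rd R n) : 0 < s ->
  (\int[lebd R n]_y (heat_kernel s x y)%:E = 1)%E.
Proof.
move=> s_gt0; elim: n x => [|n IHn] x.
  by under eq_integral do rewrite heat_kernel1E//; exact: integral_normal_pdf.
have [mu muE] := lebd_sigma_finite n.
have -> : lebd R n.+1 = (mu \x @lebesgue_measure R)%E :> (set _ -> _).
  by rewrite muE.
rewrite (fubini_tonelli1 (m1 := mu) (m2 := @lebesgue_measure R)); last 2 first.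
- by apply/measurable_EFinP; exact: (@measurable_heat_kernel n.+1 s x s_gt0).
- by move=> y; rewrite lee_fin heat_kernel_ge0.
rewrite /fubini_F -[RHS](IHn x.1) -muE; apply: eq_integral => y _.
under eq_integral do rewrite (heat_kernelS s x (y, _)) /= EFinM heat_kernel1E//.
rewrite ge0_integralZl//; last 3 first.
- by apply/measurable_EFinP; exact: measurable_normal_pdf.
- by move=> z _; rewrite lee_fin normal_pdf_ge0.
- by rewrite lee_fin heat_kernel_ge0.
by rewrite integral_normal_pdf mule1.
Qed.

Lemma heat_sg_norm_le n (s : R) (f : Rd R n -> R) (M : R) (x : Rd R n) :
  0 < s -> 0 <= M -> measurable_fun setT f -> {ae lebd R n, forall y, `|f y| <= M} ->
  `|heat_sg s f x| <= M.
Proof.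
move=> s_gt0 M_ge0 mf fM; rewrite /heat_sg s_gt0.
have mk := measurable_heat_kernel x s_gt0.
suff : (`|\int[lebd R n]_y (heat_kernel s x y * f y)%:E| <= M%:E)%E.
  by rewrite /Rintegral; case: (\int[_]_y (heat_kernel s x y * f y)%:E)%E.
apply: le_trans (le_abse_integral _ _ _) _ => //.
  by apply/measurable_EFinP; exact: measurable_funM.
apply: (@le_trans _ _ (\int[lebd R n]_y ((heat_kernel s x y)%:E * M%:E))%E).
  apply: ae_ge0_le_integral => //.
  - by apply/measurableT_comp => //; apply/measurable_EFinP; exact: measurable_funM.
  - by move=> y _; rewrite -EFinM lee_fin mulr_ge0// heat_kernel_ge0.
  - by apply/measurable_EFinP; exact: measurable_funM.
  apply: filterS fM => y fyM _ /=.
  by rewrite -EFinM lee_fin normrM ger0_norm ?heat_kernel_ge0// ler_wpM2l ?heat_kernel_ge0.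
rewrite ge0_integralZr//; first by rewrite integral_heat_kernel// mul1e.
- by apply/measurable_EFinP.
- by move=> y _; rewrite lee_fin heat_kernel_ge0.
Qed.

Lemma heat_sg0 n (f : Rd R n -> R) : heat_sg 0 f = f.
Proof. by rewrite /heat_sg ltxx. Qed.

Lemma heat_sg_ae_norm_le n (s : R) (f : Rd R n -> R) (M : R) :
  0 <= s -> 0 <= M -> measurable_fun setT f -> {ae lebd R n, forall y, `|f y| <= M} ->
  {ae lebd R n, forall x, `|heat_sg s f x| <= M}.
Proof.
rewrite le_eqVlt => /predU1P[<-|s_gt0] M_ge0 mf fM; first by rewrite heat_sg0.
by apply: nearW => x; exact: heat_sg_norm_le.
Qed.

End heat_kernel.

(* [exponential_prob_itv0c] holds for every rate; at rate [- l] the density is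
   [- l * expR (l * tau)] on [0, +oo[. *)
Lemma integral_expR_itv0c (R : realType) (l t : R) : 0 < l -> 0 <= t ->
  (\int[lebesgue_measure]_(tau in `[0%R, t]) (expR (- l * (t - tau)))%:E
    = ((1 - expR (- l * t)) / l)%:E)%E.
Proof.
move=> l_gt0; rewrite le_eqVlt => /predU1P[<-|t_gt0].
  by rewrite set_itv1 integral_set1 mulr0 expR0 subrr mul0r.
pose p tau := - exponential_pdf (- l) tau.
have pE tau : 0 <= tau -> p tau = l * expR (l * tau).
  by move=> tau_ge0; rewrite /p exponential_pdfE// mulNr !opprK.
have p_ge0 tau : [set` `[0%R, t]] tau -> 0 <= p tau.
  by rewrite /= in_itv /= => /andP[/pE -> _]; rewrite mulr_ge0 ?expR_ge0 ?ltW.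
have int_p :
    (\int[lebesgue_measure]_(tau in `[0%R, t]) (p tau)%:E = (expR (l * t) - 1)%:E)%E.
  have := exponential_prob_itv0c (- l) t_gt0; rewrite /exponential_prob.
  under eq_integral do rewrite -[exponential_pdf _ _]opprK EFinN.
  rewrite integral_ge0N => [/(congr1 oppe)|tau /p_ge0]; last by rewrite lee_fin.
  by rewrite oppeK => ->; rewrite opprK -EFinB -EFinN opprB.
transitivity
  (\int[lebesgue_measure]_(tau in `[0%R, t]) ((expR (- l * t) / l)%:E * (p tau)%:E))%E.
  apply: eq_integral => tau; rewrite inE /= in_itv /= => /andP[/pE -> _].
  by rewrite -EFinM mulrA divfK ?gt_eqF// -expRD; congr (expR _)%:E; ring.
rewrite ge0_integralZl//.
- rewrite int_p -EFinM mulrAC mulrBr mulr1 -expRD mulNr addNr expR0.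
  by congr EFin; rewrite mulrBl div1r mulrC.
- apply/measurable_EFinP/measurableT_comp => //.
  exact: measurable_funS (measurable_exponential_pdf _).
- by rewrite lee_fin divr_ge0 ?expR_ge0 ?ltW.
Qed.

Section reaction_rate.
Context (R : realType).

Lemma rate_ge0 (u : R) : 0 <= rate u.
Proof. by rewrite /rate; case: ifP => // _; exact: expR_ge0. Qed.

Lemma rate_le1 (u : R) : rate u <= 1.
Proof.
rewrite /rate; case: ifP => // u_gt0.
by rewrite -expR0 ler_expR oppr_le0 invr_ge0 ltW.
Qed.

Lemma measurable_rate : measurable_fun setT (@rate R).
Proof.
apply: nondecreasing_measurable => // u v le_uv; rewrite /rate.
case: ifP => u_gt0; case: ifP => v_gt0.
- by rewrite ler_expR lerN2 lef_pV2.
- by rewrite (lt_le_trans u_gt0 le_uv) in v_gt0.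
- exact: expR_ge0.
- by [].
Qed.

End reaction_rate.

Lemma in_Linf_fineK (R : realType) n (f : Rd R n -> R) :
  in_Linf f -> Linf f = (fine (Linf f))%:E.
Proof. by move=> [_ f_fin]; rewrite fineK// ge0_fin_numE// Lnorm_ge0. Qed.

Lemma in_Linf_ae_le (R : realType) n (f : Rd R n -> R) :
  in_Linf f -> {ae lebd R n, forall x, `|f x| <= fine (Linf f)}.
Proof.
move=> f_Linf; apply: filterS (Lnorm_infty_ae_ge _ f) => x.
by rewrite -/(Linf f) [in X in X -> _](in_Linf_fineK f_Linf) lee_fin.
Qed.

Section mild_solution.
Context (R : realType) (n : nat) (lambda beta : R) (T0 Y0 : Rd R n -> R)
  (I : set R) (T Y : R -> Rd R n -> R).
Hypotheses (lambda_gt0 : 0 < lambda) (beta_ge0 : 0 <= beta)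
  (I_itv : time_interval I) (sol : mild_solution lambda beta T0 Y0 I T Y).

Lemma measurable_reaction tau : I tau ->
  measurable_fun setT (fun y => Y tau y * rate (T tau y)).
Proof.
have [[T_Linf _] [[Y_Linf _] _]] := sol; move=> Itau.
apply: measurable_funM; first exact: (Y_Linf _ Itau).1.
by apply: measurableT_comp; [exact: measurable_rate | exact: (T_Linf _ Itau).1].
Qed.

(* The depletion factor [expR (- beta * ...)] lies in [0, 1] and so does the rate. *)
Lemma reaction_ae_le tau (M : R) : I tau -> {ae lebd R n, forall y, `|Y0 y| <= M} ->
  {ae lebd R n, forall y, `|Y tau y * rate (T tau y)| <= M}.
Proof.
have [_ [_ [_ Y_formula]]] := sol; move=> Itau Y0M.
apply: filterS2 Y0M (Y_formula _ Itau) => y Y0yM ->.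
rewrite !normrM (ger0_norm (expR_ge0 _)) (ger0_norm (rate_ge0 _)) -mulrA.
apply: le_trans Y0yM; rewrite ler_piMr// mulr_ile1 ?expR_ge0 ?rate_ge0 ?rate_le1//.
rewrite -expR0 ler_expR mulNr oppr_le0 mulr_ge0// Rintegral_ge0// => s _.
exact: rate_ge0.
Qed.

Lemma duhamel_term_le t x (M : R) : I t -> {ae lebd R n, forall y, `|Y0 y| <= M} ->
  `|Y t x * rate (T t x)| <= M ->
  `|Rintegral lebesgue_measure `[0, t]
      (fun tau => expR (- lambda * (t - tau)) *
         heat_sg (t - tau) (fun y => Y tau y * rate (T tau y)) x)|
    <= (1 - expR (- lambda * t)) / lambda * M.
Proof.
have [_ [I_nonneg I_down]] := I_itv; move=> It Y0M reaction_xM.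
have t_ge0 : 0 <= t by have /= := I_nonneg _ It; rewrite in_itv /= andbT.
have M_ge0 : 0 <= M := le_trans (normr_ge0 _) reaction_xM.
have int_bound : (\int[lebesgue_measure]_(tau in `[0%R, t])
    (expR (- lambda * (t - tau)) * M)%:E = ((1 - expR (- lambda * t)) / lambda * M)%:E)%E.
  under eq_integral do rewrite EFinM.
  rewrite ge0_integralZr//; first by rewrite integral_expR_itv0c// -EFinM.
  apply/measurable_EFinP/measurableT_comp => //.
  by apply: measurable_funM => //; exact: measurable_funB.
rewrite -[leRHS]/(fine ((1 - expR (- lambda * t)) / lambda * M)%:E) -int_bound.
apply: normr_Rintegral_le; first by rewrite int_bound ltry.
move=> tau; rewrite /= in_itv /= => /andP[tau_ge0 tau_le_t].
rewrite normrM ger0_norm ?expR_ge0// ler_wpM2l ?expR_ge0//.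
move: tau_le_t; rewrite le_eqVlt => /predU1P[->|tau_lt_t].
  by rewrite subrr heat_sg0.
have Itau : I tau by apply: (I_down _ It); rewrite /= in_itv /= tau_ge0 ltW.
apply: heat_sg_norm_le => //; first by rewrite subr_gt0.
- exact: measurable_reaction.
- exact: reaction_ae_le.
Qed.

End mild_solution.

Theorem proposition2p5 (R : realType) (n : nat) (lambda beta : R)
    (T0 Y0 : Rd R n -> R) (I : set R) (T Y : R -> Rd R n -> R) :
  0 < lambda -> 0 <= beta ->
  in_Linf T0 -> in_Linf Y0 ->
  {ae lebd R n, forall x, 0 <= Y0 x} ->
  time_interval I ->
  mild_solution lambda beta T0 Y0 I T Y ->
  forall t, I t ->
    (Linf (T t) <= (expR (- lambda * t)%R)%:E * Linf T0 + (lambda^-1)%:E * Linf Y0)%E.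
Proof.
move=> lambda_gt0 beta_ge0 T0_Linf Y0_Linf _ I_itv sol t It.
have [_ [_ [T_formula _]]] := sol.
have t_ge0 : 0 <= t by have /= := I_itv.2.1 _ It; rewrite in_itv /= andbT.
have [M0_ge0 MY_ge0] : 0 <= fine (Linf T0) /\ 0 <= fine (Linf Y0).
  by split; rewrite fine_ge0// Lnorm_ge0.
have lambdaV_ge0 : 0 <= lambda^-1 by rewrite invr_ge0 ltW.
rewrite (in_Linf_fineK T0_Linf) (in_Linf_fineK Y0_Linf) -!EFinM -EFinD.
apply: Lnorm_infty_le; first by rewrite addr_ge0// mulr_ge0// expR_ge0.
have heat_T0 := heat_sg_ae_norm_le t_ge0 M0_ge0 T0_Linf.1 (in_Linf_ae_le T0_Linf).
have reaction_t := reaction_ae_le beta_ge0 sol It (in_Linf_ae_le Y0_Linf).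
apply: filterS3 heat_T0 reaction_t (T_formula _ It) => x heat_x reaction_x ->.
apply: le_trans (ler_normD _ _) _; apply: lerD.
  by rewrite normrM ger0_norm ?expR_ge0// ler_wpM2l ?expR_ge0.
have := duhamel_term_le lambda_gt0 beta_ge0 I_itv sol It (in_Linf_ae_le Y0_Linf) reaction_x.
move=> /le_trans; apply.
by rewrite -mulrA ler_piMl ?mulr_ge0// gerBl expR_ge0.
Qed.
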